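(* Let $r \in \mathbb{Z}$ and let $P(r)=(P_{n,k})_{n,k\ge 0}$ be the Riordan array $\left(\frac{1+rx^2}{1+x^2}, \frac{x}{1+x^2}\right)$, i.e. $P_{n,k}=[x^n]\,\frac{1+rx^2}{1+x^2}\left(\frac{x}{1+x^2}\right)^k$. Then for all integers $n,k\ge 0$, $$P_{n,k}=\binom{\frac{n+k}{2}}{k}(-1)^{\frac{n-k}{2}}\frac{1+(-1)^{n-k}}{2}-r\binom{\frac{n+k-2}{2}}{k}(-1)^{\frac{n-k}{2}}\frac{1+(-1)^{n-k}}{2}+r\cdot 0^{n+k},$$ where any term carrying the factor $\frac{1+(-1)^{n-k}}{2}$ is interpreted as $0$ when $n-k$ is odd.
   Context: For a power series $h(x)$, $[x^n]h(x)$ denotes the coefficient of $x^n$. $0^m$ equals $1$ if $m=0$ and $0$ if $m>0$. For an integer $a$ and integer $k\ge 0$, $\binom{a}{k}=\frac{a(a-1)\cdots(a-k+1)}{k!}$ (so $\binom{-1}{0}=1$, and $\binom{a}{k}=0$ when $0\le a<k$). The Riordan array $(g(x),f(x))$ is the lower-triangular matrix with $(n,k)$ entry $[x^n]g(x)f(x)^k$. The matrix $P(r)$ is the coefficient array of the polynomials $P_n(x;r)=\sum_{k} P_{n,k}x^k$ (the restricted Chebyshev–Boubaker polynomials). *)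

From mathcomp Require Import all_boot all_order all_algebra.
Set Implicit Arguments. Unset Strict Implicit. Unset Printing Implicit Defensive.
Import Order.TTheory GRing.Theory Num.Theory.
Local Open Scope ring_scope.

Section FPS.
Variable R : comNzRingType.
Definition fps := nat -> R.

Definition fmul (a b : fps) : fps := fun n => \sum_(i < n.+1) a i * b (n - i)%N.
Definition fone : fps := fun n => (n == 0%N)%:R.
Definition fpow (a : fps) (k : nat) : fps := iter k (fmul a) fone.

(* Inverse of a series with constant term 1:
   b_0 = 1, b_n = - sum_{1<=i<=n} a_i b_{n-i}. inv_seq a n = [:: b_0; ...; b_n]. *)
Fixpoint inv_seq (a : fps) (n : nat) : seq R :=
  match n with
  | 0 => [:: 1]
  | m.+1 => let s := inv_seq a m in
            rcons s (- \sum_(1 <= i < m.+2) a i * nth 0 s (m.+1 - i)%N)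
  end.
Definition finv (a : fps) : fps := fun n => nth 0 (inv_seq a n) n.

Definition riordan (g f : fps) (n k : nat) : R := fmul g (fpow f k) n.
End FPS.

Definition one_x2 : fps int := fun n => (n == 0%N)%:R + (n == 2%N)%:R.
Definition one_rx2 (r : int) : fps int := fun n => (n == 0%N)%:R + r * (n == 2%N)%:R.
Definition xser : fps int := fun n => (n == 1%N)%:R.

Definition Pentry (r : int) (n k : nat) : int :=
  riordan (fmul (one_rx2 r) (finv one_x2)) (fmul xser (finv one_x2)) n k.

Definition gbinom (a : int) (k : nat) : rat :=
  (\prod_(i < k) (a%:~R - (i%:R : rat))) / (k`!)%:R.

(* The columns of P(r) are pinned down by a second-order recurrence: (1 + x^2)
   times column k+1 is x times column k, and (1 + x^2) times column 0 is
   1 + r x^2.  In coefficients, P(n+2,k+1) + P(n,k+1) = P(n+1,k) and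
   P(n+2,0) + P(n,0) = r [n = 0], and the first two entries of each column are
   known.  The closed form equals U(n,k) + r U(n-2,k), where U(k+2m,k) =
   (-1)^m binom(k+m,k) are the coefficients of the Chebyshev polynomials
   U_n(x/2); by Pascal's rule it satisfies the same recurrences and initial
   values, so the two arrays agree column by column. *)

From Pilot Require Import Defs.
From mathcomp Require Import all_boot all_order all_algebra.
From mathcomp Require Import zify ring.
Set Implicit Arguments.
Unset Strict Implicit.
Unset Printing Implicit Defensive.
Import Order.TTheory GRing.Theory Num.Theory.
Local Open Scope ring_scope.

Section PowerSeries.
Variable R : comNzRingType.
Implicit Types a b g s t : fps R.

Lemma fmulC a b n : fmul a b n = fmul b a n.
Proof.
rewrite /fmul (reindex_inj rev_ord_inj) /=; apply: eq_bigr => i _.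
by rewrite mulrC subSS subKn // -ltnS.
Qed.

Lemma fmulr1 a n : fmul a (fone R) n = a n.
Proof.
rewrite /fmul big_ord_recr /= subnn mulr1 big1 ?add0r // => i _.
by rewrite /fone subn_eq0 leqNgt ltn_ord mulr0.
Qed.

Lemma fmul_coef0 a b : fmul a b 0 = a 0%N * b 0%N.
Proof. by rewrite /fmul big_ord1. Qed.

Lemma fmul_coef1 a b : fmul a b 1 = a 0%N * b 1%N + a 1%N * b 0%N.
Proof. by rewrite /fmul big_ord_recr big_ord1. Qed.

(* In series form: if (1 + x^2) s = x t + s_0 + (s_1 - t_0) x, then
   (1 + x^2) (g s) = x (g t) + g (s_0 + (s_1 - t_0) x). *)
Lemma fmul_rec2 g s t : (forall n, s n.+2 + s n = t n.+1) -> forall n,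
  fmul g s n.+2 + fmul g s n
  = fmul g t n.+1 + g n.+1 * (s 1%N - t 0%N) + g n.+2 * s 0%N.
Proof.
move=> s_rec n; rewrite /fmul.
rewrite [\sum_(i < n.+3) _]big_ord_recr [\sum_(i < n.+2) _ * s _]big_ord_recr.
rewrite [\sum_(i < n.+2) _ * t _]big_ord_recr /= subnn subSn // subnn.
have -> : \sum_(i < n.+1) g i * s (n.+2 - i)%N
        = \sum_(i < n.+1) g i * t (n.+1 - i)%N - \sum_(i < n.+1) g i * s (n - i)%N.
  rewrite -sumrB; apply: eq_bigr => i _; have le_in : (i <= n)%N by rewrite -ltnS.
  by rewrite -mulrBr !subSn ?(leqW le_in) // -s_rec addrK.
ring.
Qed.

Lemma size_inv_seq a n : size (inv_seq a n) = n.+1.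
Proof. by elim: n => //= n IHn; rewrite size_rcons IHn. Qed.

(* Plain [finv] would be fingraph's inverse of an injective finite function. *)
Lemma nth_inv_seq a n i : (i <= n)%N -> nth 0 (inv_seq a n) i = Defs.finv a i.
Proof.
elim: n => [|n IHn]; first by rewrite leqn0 => /eqP ->.
rewrite leq_eqVlt => /predU1P [-> //|lt_in].
by rewrite /= nth_rcons size_inv_seq lt_in IHn.
Qed.

Lemma finvS a n :
  Defs.finv a n.+1 = - \sum_(1 <= i < n.+2) a i * Defs.finv a (n.+1 - i)%N.
Proof.
rewrite {1}/Defs.finv /= nth_rcons size_inv_seq ltnn eqxx; congr (- _).
rewrite !big_nat; apply: eq_bigr => i /andP [i_gt0 _].
by rewrite nth_inv_seq // leq_subLR addnC -addn1 leq_add2l.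
Qed.

Lemma fmul_finv a : a 0%N = 1 -> forall n, fmul a (Defs.finv a) n = fone R n.
Proof.
move=> a0 [|n]; first by rewrite fmul_coef0 a0 mul1r.
rewrite /fmul big_ord_recl a0 mul1r finvS /fone /=.
by rewrite big_add1 big_mkord addNr.
Qed.

End PowerSeries.

Lemma rec2_unique (V : zmodType) (u v w : nat -> V) :
  u 0%N = v 0%N -> u 1%N = v 1%N ->
  (forall n, u n.+2 + u n = w n) -> (forall n, v n.+2 + v n = w n) ->
  u =1 v.
Proof.
move=> eq0 eq1 u_rec v_rec n.
suff /(_ n)[] : forall n, u n = v n /\ u n.+1 = v n.+1 by [].
elim=> [|m [eq_m eq_m1]]; split=> //.
by apply: (addIr (u m)); rewrite u_rec {1}eq_m v_rec.
Qed.

Section RiordanX2.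
Variables (R : comNzRingType) (g f : fps R).
Hypotheses (f0 : f 0%N = 0) (f1 : f 1%N = 1).
Hypothesis f_rec : forall n, f n.+2 + f n = fone R n.+1.

Lemma fpow_coef0 k : fpow f k.+1 0 = 0.
Proof. by rewrite /= fmul_coef0 f0 mul0r. Qed.

Lemma fpow_coef1 k : fpow f k.+1 1 = fpow f k 0%N.
Proof. by rewrite /= fmul_coef1 f0 f1 mul0r mul1r add0r. Qed.

Lemma fpow_rec k n : fpow f k.+1 n.+2 + fpow f k.+1 n = fpow f k n.+1.
Proof.
rewrite /= !(fmulC f) (fmul_rec2 _ f_rec) fmulr1 f0 f1 /fone /=.
by rewrite subrr !mulr0 !addr0.
Qed.

Lemma riordan0 n : riordan g f n 0 = g n.
Proof. exact: fmulr1. Qed.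

Lemma riordan_coef0 k : riordan g f 0 k.+1 = 0.
Proof. by rewrite /riordan fmul_coef0 fpow_coef0 mulr0. Qed.

Lemma riordan_coef1 k : riordan g f 1 k.+1 = riordan g f 0 k.
Proof.
by rewrite /riordan fmul_coef1 fmul_coef0 fpow_coef0 fpow_coef1 mulr0 addr0.
Qed.

Lemma riordan_rec n k :
  riordan g f n.+2 k.+1 + riordan g f n k.+1 = riordan g f n.+1 k.
Proof.
rewrite /riordan (fmul_rec2 _ (fpow_rec k)) fpow_coef0 fpow_coef1.
by rewrite subrr !mulr0 !addr0.
Qed.

End RiordanX2.

Lemma fmul_one_x2 s n : fmul one_x2 s n.+2 = s n.+2 + s n.
Proof.
rewrite fmulC /fmul !big_ord_recr /= subnn subSnn.
have -> : (n.+2 - n = 2)%N by rewrite -addn2 addKn.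
rewrite big1 => [|i _]; first by rewrite /one_x2 /=; ring.
have [j ->] : exists j, (n.+2 - i = j.+3)%N.
  by exists (n.-1 - i)%N; have := ltn_ord i; lia.
by rewrite /one_x2 mulr0.
Qed.

Lemma fmul_xser s n : fmul xser s n.+1 = s n.
Proof.
rewrite fmulC /fmul !big_ord_recr /= subnn subSnn big1 => [|i _].
  by rewrite /xser /=; ring.
by rewrite /xser subSn 1?ltnW // eqSS subn_eq0 leqNgt ltn_ord mulr0.
Qed.

Definition inv_one_x2 : fps int := Defs.finv one_x2.

Lemma inv_one_x2_coef1 : inv_one_x2 1 = 0.
Proof.
have := fmul_finv (a := one_x2) erefl 1.
by rewrite fmul_coef1 /one_x2 /= mul1r mul0r addr0.
Qed.

Lemma inv_one_x2_rec n : inv_one_x2 n.+2 + inv_one_x2 n = 0.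
Proof. by rewrite -fmul_one_x2 fmul_finv. Qed.

Definition Pf : fps int := fmul xser inv_one_x2.
Definition Pg (r : int) : fps int := fmul (one_rx2 r) inv_one_x2.

Lemma Pf_coef0 : Pf 0 = 0.
Proof. by rewrite /Pf fmul_coef0 mul0r. Qed.

Lemma Pf_coef1 : Pf 1 = 1.
Proof. by rewrite /Pf fmul_xser. Qed.

Lemma Pf_rec n : Pf n.+2 + Pf n = fone int n.+1.
Proof.
case: n => [|n]; first by rewrite Pf_coef0 /Pf fmul_xser inv_one_x2_coef1 addr0.
by rewrite /Pf !fmul_xser inv_one_x2_rec.
Qed.

Lemma Pg_coef0 r : Pg r 0 = 1.
Proof. by rewrite /Pg fmul_coef0 /one_rx2 /= mulr0 !addr0 mulr1. Qed.

Lemma Pg_coef1 r : Pg r 1 = 0.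
Proof. by rewrite /Pg fmul_coef1 inv_one_x2_coef1 /one_rx2 /=; ring. Qed.

Lemma Pg_rec r n : Pg r n.+2 + Pg r n = r * (n == 0)%:R.
Proof.
rewrite /Pg (fmul_rec2 (t := fun=> 0) _ inv_one_x2_rec) inv_one_x2_coef1.
rewrite subrr mulr0 addr0 mulr1 /fmul big1 ?add0r => [|i _]; last exact: mulr0.
by rewrite /one_rx2 add0r.
Qed.

Definition chebU (k n : nat) : int :=
  if odd (n + k) || (n < k)%N then 0
  else (-1) ^+ (n - k)./2 * 'C(k + (n - k)./2, k)%:R.

Lemma chebU_eq0 k n : odd (n + k) || (n < k)%N -> chebU k n = 0.
Proof. by rewrite /chebU => ->. Qed.

Lemma chebU_double k m n :
  n = (k + m.*2)%N -> chebU k n = (-1) ^+ m * 'C(k + m, k)%:R.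
Proof.
move=> ->; rewrite /chebU addKn doubleK addnAC addnn -doubleD odd_double /=.
by rewrite ltnNge leq_addr.
Qed.

Lemma even_diff_double k n :
  ~~ odd (n + k) -> (k <= n)%N -> exists m, n = (k + m.*2)%N.
Proof.
move=> even_nk le_kn; exists (n - k)./2.
rewrite -[in LHS](subnKC le_kn) -[in LHS](odd_double_half (n - k)).
by rewrite oddB // -oddD (negbTE even_nk).
Qed.

Lemma chebU_rec k n : chebU k.+1 n.+2 + chebU k.+1 n = chebU k n.+1.
Proof.
have [guard|] := boolP (odd (n.+1 + k) || (n.+1 < k)%N).
  rewrite !chebU_eq0 ?addr0 //; move: guard; rewrite !addnS !addSn /= ?negbK ?ltnS.
    by case/orP=> [->//|lt_nk]; apply/orP; right; lia.
  by case/orP=> [->//|->]; rewrite orbT.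
case/norP=> even_nk; rewrite -leqNgt => le_kn.
have [[|m] def_n] := even_diff_double even_nk le_kn.
  rewrite (chebU_double (_ : n.+2 = k.+1 + 0.*2)%N); last by lia.
  rewrite (chebU_double def_n) (chebU_eq0 (_ : _ || (n < k.+1)%N)); last by lia.
  by rewrite !addn0 !binn addr0.
rewrite (chebU_double (_ : n.+2 = k.+1 + m.+1.*2)%N); last by lia.
rewrite (chebU_double (_ : n = k.+1 + m.*2)%N); last by lia.
rewrite (chebU_double def_n) !addnS !addSn binS natrD exprS; ring.
Qed.

Lemma chebU0_rec n : chebU 0 n.+2 + chebU 0 n = 0.
Proof.
have [odd_n|even_n] := boolP (odd n).
  by rewrite !chebU_eq0 // addn0 /= ?negbK odd_n.
have [m def_n] : exists m, n = (0 + m.*2)%N by apply: even_diff_double; rewrite ?addn0.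
rewrite (chebU_double def_n) (chebU_double (_ : n.+2 = 0 + m.+1.*2)%N); last by lia.
by rewrite !bin0 exprS; ring.
Qed.

Lemma chebU_coef0 k : chebU k.+1 0 = 0.
Proof. by rewrite chebU_eq0 // orbT. Qed.

Lemma chebU_coef1 k : chebU k.+1 1 = chebU k 0.
Proof. by case: k => [|k]; rewrite /chebU // !orbT. Qed.

Definition Pclosed (r : int) (k n : nat) : int :=
  chebU k n + r * (if n is n'.+2 then chebU k n' else 0).

Lemma Pclosed_rec r k n :
  Pclosed r k.+1 n.+2 + Pclosed r k.+1 n = Pclosed r k n.+1.
Proof.
have shift_rec : chebU k.+1 n + (if n is n'.+2 then chebU k.+1 n' else 0) =
                 (if n.+1 is n'.+2 then chebU k n' else 0).
  by case: n => [|[|n]]; rewrite ?addr0 ?chebU_coef0 ?chebU_coef1 ?chebU_rec.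
by rewrite /Pclosed -(chebU_rec k n) -shift_rec; ring.
Qed.

Lemma Pclosed0_rec r n : Pclosed r 0 n.+2 + Pclosed r 0 n = r * (n == 0)%:R.
Proof.
have shift_rec : chebU 0 n + (if n is n'.+2 then chebU 0 n' else 0) = (n == 0)%:R.
  by case: n => [|[|n]]; rewrite ?chebU0_rec.
have rec0 : chebU 0 n.+2 = - chebU 0 n by apply/eqP; rewrite -addr_eq0 chebU0_rec.
by rewrite /Pclosed rec0 -shift_rec; ring.
Qed.

Lemma riordan_closed r n k : riordan (Pg r) Pf n k = Pclosed r k n.
Proof.
elim: k n => [|k IHk].
  apply: (@rec2_unique _ (riordan (Pg r) Pf ^~ 0) _ (fun n => r * (n == 0)%:R)).
  - by rewrite riordan0 Pg_coef0 /Pclosed mulr0 addr0.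
  - by rewrite riordan0 Pg_coef1 /Pclosed mulr0 addr0.
  - by move=> n; rewrite !riordan0 Pg_rec.
  - exact: Pclosed0_rec.
apply: (@rec2_unique _ (riordan (Pg r) Pf ^~ k.+1) _ (fun n => Pclosed r k n.+1)).
- by rewrite riordan_coef0 ?Pf_coef0 // /Pclosed chebU_coef0 mulr0 addr0.
- by rewrite riordan_coef1 ?Pf_coef0 ?Pf_coef1 // IHk /Pclosed chebU_coef1.
- move=> n; rewrite riordan_rec ?IHk //.
  + exact: Pf_coef0.
  + exact: Pf_coef1.
  + exact: Pf_rec.
- exact: Pclosed_rec.
Qed.

Lemma Pclosed_odd r k n : odd (n + k) -> Pclosed r k n = 0.
Proof.
move=> odd_nk; rewrite /Pclosed chebU_eq0 ?odd_nk // add0r.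
case: n odd_nk => [|[|n]]; rewrite ?mulr0 // !addSn /= negbK => odd_nk.
by rewrite chebU_eq0 ?odd_nk ?mulr0.
Qed.

Lemma Pclosed_lt r k n : (n < k)%N -> Pclosed r k n = 0.
Proof.
move=> lt_nk; rewrite /Pclosed chebU_eq0 ?lt_nk ?orbT // add0r.
case: n lt_nk => [|[|n]] lt_nk; rewrite ?mulr0 //.
by rewrite chebU_eq0 ?mulr0 // (ltn_trans _ lt_nk) ?orbT.
Qed.

Lemma Pclosed_double r k m :
  Pclosed r k (k + m.*2) =
  (-1) ^+ m * ('C(k + m, k)%:R - r * 'C((k + m).-1, k)%:R) + r * (k + m == 0)%N%:R.
Proof.
rewrite /Pclosed (chebU_double (erefl (k + m.*2)%N)).
case: m => [|m].
  rewrite addn0 binn; case: k => [|k]; first by rewrite /= binn; ring.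
  have -> : (if k.+1 is n'.+2 then chebU k.+1 n' else 0) = 0.
    by case: k => [|k] //; rewrite chebU_eq0 //; lia.
  by rewrite bin_small //=; ring.
rewrite (_ : k + m.+1.*2 = (k + m.*2).+2)%N; last by lia.
rewrite (chebU_double (erefl (k + m.*2)%N)) addnS /= exprS; ring.
Qed.

Lemma gbinom0 (a : int) : gbinom a 0 = 1.
Proof. by rewrite /gbinom big_ord0 divr1. Qed.

Lemma gbinom_nat (a k : nat) : gbinom a k = 'C(a, k)%:R.
Proof.
have ffact_prod : \prod_(i < k) ((a%:Z)%:~R - i%:R : rat) = (a ^_ k)%:R.
  elim: k => [|k IHk]; first by rewrite big_ord0 ffactn0.
  rewrite big_ord_recr /= IHk ffactnSr natrM.
  case: (leqP k a) => [le_ka|lt_ak]; first by rewrite natrB.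
  by rewrite ffact_small // !mul0r.
by rewrite /gbinom ffact_prod -bin_ffact natrM mulfK // pnatr_eq0 -lt0n fact_gt0.
Qed.

Lemma gbinom_subn1 (a k : nat) :
  (0 < a)%N || (k == 0)%N -> gbinom (a%:Z - 1) k = 'C(a.-1, k)%:R.
Proof.
case: a => [/eqP ->|a]; first by rewrite gbinom0.
by move=> _; rewrite intS addrC addKr gbinom_nat.
Qed.

Theorem mainTheorem1 (r : int) (n k : nat) :
  ((Pentry r n k)%:~R : rat) =
    (if odd (n + k) then 0
     else gbinom ((n + k)./2)%:Z k * (-1) ^+ (`|(n%:Z - k%:Z)|%N)./2)
    - (r%:~R : rat) *
      (if odd (n + k) then 0
       else gbinom (((n + k)./2)%:Z - 1) k * (-1) ^+ (`|(n%:Z - k%:Z)|%N)./2)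
    + (r%:~R : rat) * (0 : rat) ^+ (n + k).
Proof.
have -> : Pentry r n k = Pclosed r k n := riordan_closed r n k.
rewrite expr0n; have [odd_nk|even_nk] := boolP (odd (n + k)).
  have -> : (n + k == 0)%N = false by apply: contraTF odd_nk => /eqP ->.
  by rewrite Pclosed_odd //= mulr0n; ring.
have [lt_nk|le_kn] := ltnP n k.
  have half_gt0 : (0 < (n + k)./2)%N by lia.
  have -> : (n + k == 0)%N = false by lia.
  rewrite Pclosed_lt // gbinom_subn1 ?half_gt0 // gbinom_nat !bin_small /=; try lia.
  by rewrite mulr0n; ring.
have [m ->] := even_diff_double even_nk le_kn.
have -> : ((k + m.*2 + k)./2 = k + m)%N by lia.
have -> : (`|(k + m.*2)%:Z - k%:Z|./2 = m)%N.
  by rewrite distnEl ?leq_addr // addKn doubleK.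
have -> : (k + m.*2 + k == 0)%N = (k + m == 0)%N by lia.
rewrite Pclosed_double gbinom_nat gbinom_subn1; last by lia.
by rewrite !(rmorphM, rmorphB, rmorphD, rmorphXn, rmorphN1, rmorph_nat) /=; ring.
Qed.
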